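(* Let $\mathcal{M}=\langle S,\to,L\rangle$ be a labeled transition system, let $B\subseteq S\times S$ be a skipping simulation on $\mathcal{M}$, and let $\kappa$ be a cardinal with $\omega\preceq\kappa$ and $|S|\preceq\kappa$. Then for all $s,w\in S$, $\mathit{size}(\mathit{ranktCt}(\mathcal{M},s,w))$ is an ordinal of cardinality at most $\kappa$.
   Context: A labeled transition system is $\mathcal{M}=\langle S,\to,L\rangle$ where $S$ is a non-empty set of states, $\to\subseteq S\times S$ is left-total, and $L$ is a function with domain $S$. A fullpath is an infinite sequence $\sigma$ with $\sigma(i)\to\sigma(i+1)$ for all $i$; it starts at $\sigma(0)$. $w\to^{+}v$ means there is a finite path $w=v_0\to\cdots\to v_k=v$ with $k\ge1$. Let $\mathit{INC}$ be the set of strictly increasing infinite sequences of naturals starting at $0$. For a fullpath $\sigma$ and $\pi\in\mathit{INC}$ the $i$-th segment of $\sigma$ is $\sigma(\pi(i)),\dots,\sigma(\pi(i+1)-1)$. $\mathit{match}(B,\sigma,\delta)$ holds iff there exist $\pi,\xi\in\mathit{INC}$ such that for every $i$ and every state $x$ in the $i$-th segment of $\sigma$ w.r.t. $\pi$, $xB\delta(\xi(i))$. $B$ is a skipping simulation (SKS) iff for all $s,w$ with $sBw$: $L(s)=L(w)$, and for every fullpath $\sigma$ starting at $s$ there is a fullpath $\delta$ starting at $w$ with $\mathit{match}(B,\sigma,\delta)$. The computation tree $\mathit{ctree}(\mathcal{M},s)$ has as nodes finite sequences over $S$; it is the smallest tree such that $\langle s\rangle$ is the root, and if $\langle s,\dots,x\rangle$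 is a node and $x\to y$ then $\langle s,\dots,x,y\rangle$ is a node whose parent is $\langle s,\dots,x\rangle$. For the SKS $B$: if not $sBw$, $\mathit{ranktCt}(\mathcal{M},s,w)$ is the empty tree; otherwise it is the largest subtree of $\mathit{ctree}(\mathcal{M},s)$ (containing the root) such that every non-root node $\langle s,\dots,x\rangle$ satisfies $xBw$ and, for all $v$ with $w\to^{+}v$, not $xBv$. (Every branch of this tree is finite.) For a tree $t$ all of whose branches are finite, ordinals are assigned to its nodes by $\mathit{size}(t,x)=\bigcup_{c\text{ a child of }x}\mathit{size}(t,c)+1$ (von Neumann ordinals; the union of the successors, so a leaf gets $0$... i.e. the supremum of $\mathit{size}(t,c)+1$ over children $c$), and $\mathit{size}(\mathit{ranktCt}(\mathcal{M},s,w))=\mathit{size}(\mathit{ranktCt}(\mathcal{M},s,w),\langle s\rangle)$. $\preceq$ compares ordinals and cardinals. *)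

From Stdlib Require Import List.
Import ListNotations.
Set Implicit Arguments.

(** * Ordinals (Aczel/Brouwer style)
    [osup I f] denotes the ordinal  sup_{i : I} (f i + 1)
    (= union of the successors), exactly as in the paper's definition of size. *)
Inductive Ord : Type := osup : forall (I : Type), (I -> Ord) -> Ord.

Fixpoint ole (a b : Ord) : Prop :=
  match a with
  | osup f => forall i, match b with osup g => exists j, ole (f i) (g j) end
  end.

Definition olt (a b : Ord) : Prop :=
  match b with osup g => exists j, ole a (g j) end.

(** The cardinality of the ordinal [a] (the set of ordinals below [a], taken up
    to order-equivalence) is at most the cardinality of the type [K]. *)
Definition ocard_le (a : Ord) (K : Type) : Prop :=
  exists h : Ord -> K, forall b c, olt b a -> olt c a -> h b = h c ->
    ole b c /\ ole c b.

Definition card_le (A K : Type) : Prop :=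
  exists h : A -> K, forall x y, h x = h y -> x = y.

Section LTS.
Variables (St Lab : Type) (R : St -> St -> Prop) (L : St -> Lab).

Definition is_lts : Prop := inhabited St /\ (forall x, exists y, R x y).

Definition fullpath (sigma : nat -> St) : Prop := forall i, R (sigma i) (sigma (Datatypes.S i)).

Definition INC (pi : nat -> nat) : Prop := pi 0 = 0 /\ forall i, pi i < pi (Datatypes.S i).

Definition matchB (B : St -> St -> Prop) (sigma delta : nat -> St) : Prop :=
  exists pi xi, INC pi /\ INC xi /\
    forall i k, pi i <= k < pi (Datatypes.S i) -> B (sigma k) (delta (xi i)).

Definition SKS (B : St -> St -> Prop) : Prop :=
  forall s w, B s w ->
    L s = L w /\
    forall sigma, fullpath sigma -> sigma 0 = s ->
      exists delta, fullpath delta /\ delta 0 = w /\ matchB B sigma delta.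

Inductive tplus : St -> St -> Prop :=
  | tplus1 x y : R x y -> tplus x y
  | tplusS x y z : R x y -> tplus y z -> tplus x z.

Inductive ctree_node (s : St) : list St -> Prop :=
  | ct_root : ctree_node s [s]
  | ct_step l x y : ctree_node s (l ++ [x]) -> R x y -> ctree_node s (l ++ [x; y]).

(** Condition on the last state x of a non-root node of ranktCt(M,s,w). *)
Definition rank_cond (B : St -> St -> Prop) (w x : St) : Prop :=
  B x w /\ forall v, tplus w v -> ~ B x v.

Definition rank_subtree (B : St -> St -> Prop) (s w : St) (T : list St -> Prop) : Prop :=
  (forall n, T n -> ctree_node s n) /\
  T [s] /\
  (forall l x y, T (l ++ [x; y]) -> T (l ++ [x])) /\
  (forall l x, T (l ++ [x]) -> l <> [] -> rank_cond B w x).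

(** ranktCt(M,s,w): empty if not sBw, otherwise the largest such subtree
    (the union of all of them). *)
Definition ranktCt (B : St -> St -> Prop) (s w : St) : list St -> Prop :=
  fun n => B s w /\ exists T, rank_subtree B s w T /\ T n.

(** [is_size t n a]: size(t, n) = a, where the children of node n in t are the
    nodes n ++ [y] belonging to t.  size(t,n) = sup over children c of (size(t,c)+1). *)
Inductive is_size (t : list St -> Prop) : list St -> Ord -> Prop :=
  | is_size_intro n (f : {y : St | t (n ++ [y])} -> Ord) :
      (forall c, is_size t (n ++ [proj1_sig c]) (f c)) ->
      is_size t n (@osup {y : St | t (n ++ [y])} f).

End LTS.

(* The size of a node of ranktCt(M,s,w) depends only on its last state, because
   whether a state y may be appended after a state x is decided by x and y alone
   (x -> y, y B w, and y is B-related to no successor of w).  Hence every ordinal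
   below the size of the root is, up to equivalence, the size of a node ending in
   some state, and sending it to that state is injective: the size has at most
   |S| <= kappa predecessors.  The sizes exist because the tree is well-founded:
   an infinite branch would be a fullpath from s whose states after s are all
   B-related to w and to no successor of w, so no fullpath from w can match it. *)

From Stdlib Require Import List Lia Classical ClassicalEpsilon.
Import ListNotations.
Set Implicit Arguments.
Unset Strict Implicit.

Lemma ole_trans a b c : ole a b -> ole b c -> ole a c.
Proof.
  revert b c; induction a as [I f IH]; intros [J g] [K h] Hab Hbc i.
  destruct (Hab i) as [j Hj]; destruct (Hbc j) as [k Hk].
  exists k; exact (IH i _ _ Hj Hk).
Qed.

Lemma ole_or_olt a b : ole a b \/ olt b a.
Proof.
  revert b; induction a as [I f IH]; intros [J g].
  destruct (classic (exists i, ole (osup g) (f i))) as [Hlt | Hle]; [now right | left].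
  intro i; apply NNPP; intro Hi; apply Hle; exists i.
  destruct (f i) as [I' h] eqn:Efi; intro j.
  destruct (IH i (g j)) as [Hij | Hji]; rewrite Efi in *; [| exact Hji].
  exfalso; apply Hi; now exists j.
Qed.

Definition oeq (a b : Ord) : Prop := ole a b /\ ole b a.

Lemma oeq_trans a b c : oeq a b -> oeq b c -> oeq a c.
Proof. intros [Hab Hba] [Hbc Hcb]; split; eapply ole_trans; eassumption. Qed.

Lemma oeq_sym a b : oeq a b -> oeq b a.
Proof. now intros []. Qed.

Section SizeOfTrees.
Variables (St : Type) (t : list St -> Prop).

Section Existence.
Variable step : St -> St -> Prop.
Hypothesis child_step : forall m x y, t ((m ++ [x]) ++ [y]) -> step y x.

Lemma is_size_exists x : Acc step x -> forall m, exists a, is_size t (m ++ [x]) a.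
Proof.
  induction 1 as [x _ IH]; intro m.
  assert (Hchild : forall c : {y | t ((m ++ [x]) ++ [y])},
             exists a, is_size t ((m ++ [x]) ++ [proj1_sig c]) a).
  { intros [y Hy]; exact (IH y (child_step Hy) (m ++ [x])). }
  exists (osup (fun c => proj1_sig (constructive_indefinite_description _ (Hchild c)))).
  constructor; intro c.
  exact (proj2_sig (constructive_indefinite_description _ (Hchild c))).
Qed.

End Existence.

Definition children_by_last : Prop :=
  forall m m' x y, t (m' ++ [x]) -> t ((m ++ [x]) ++ [y]) -> t ((m' ++ [x]) ++ [y]).

Lemma is_size_below n a b : is_size t n a -> olt b a ->
  exists m x a', t (m ++ [x]) /\ is_size t (m ++ [x]) a' /\ oeq b a'.
Proof.
  intros Ha; revert b; induction Ha as [n f Hf IH]; intros b [[y Hy] Hb].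
  destruct (ole_or_olt (f (exist _ y Hy)) b) as [Hfb | Hbf].
  - exists n, y, (f (exist _ y Hy)).
    split; [exact Hy | split; [exact (Hf (exist _ y Hy)) | split; assumption]].
  - exact (IH _ _ Hbf).
Qed.

Hypothesis by_last : children_by_last.

Lemma is_size_ole n n' a a' : is_size t n a -> is_size t n' a' ->
  (forall y, t (n ++ [y]) -> t (n' ++ [y])) -> ole a a'.
Proof.
  intros Ha; revert n' a'; induction Ha as [n f Hf IH].
  intros n' a' [n'' g Hg] Hsub [y Hy].
  exists (exist _ y (Hsub y Hy)).
  apply (IH _ _ _ (Hg _)); intros z Hz; exact (by_last (Hsub y Hy) Hz).
Qed.

Lemma is_size_last m m' x a a' :
  t (m ++ [x]) -> t (m' ++ [x]) ->
  is_size t (m ++ [x]) a -> is_size t (m' ++ [x]) a' -> oeq a a'.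
Proof.
  intros Hm Hm' Ha Ha'; split; eapply is_size_ole; try eassumption;
    intros y Hy; eapply by_last; eassumption.
Qed.

Lemma is_size_ocard_le (K : Type) m x a :
  card_le St K -> is_size t (m ++ [x]) a -> ocard_le a K.
Proof.
  intros [h h_inj] Ha.
  pose (realized b y := exists l a', t (l ++ [y]) /\ is_size t (l ++ [y]) a' /\ oeq b a').
  exists (fun b => h (epsilon (inhabits x) (realized b))).
  intros b c Hb Hc Hbc; apply h_inj in Hbc.
  assert (Rb : realized b (epsilon (inhabits x) (realized b))).
  { apply epsilon_spec; destruct (is_size_below Ha Hb) as (l & y & Hy); now exists y, l. }
  assert (Rc : realized c (epsilon (inhabits x) (realized c))).
  { apply epsilon_spec; destruct (is_size_below Ha Hc) as (l & y & Hy); now exists y, l. }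
  rewrite <- Hbc in Rc.
  destruct Rb as (lb & ab & Tb & Sb & Eb); destruct Rc as (lc & ac & Tc & Sc & Ec).
  apply (oeq_trans Eb), (oeq_trans (is_size_last Tb Tc Sb Sc)), oeq_sym, Ec.
Qed.

End SizeOfTrees.

Lemma snoc2_inj {A} (l l' : list A) x y x' y' :
  l ++ [x; y] = (l' ++ [x']) ++ [y'] -> l = l' /\ x = x' /\ y = y'.
Proof.
  change (l ++ [x; y]) with (l ++ [x] ++ [y]); rewrite app_assoc.
  intros [H <-]%app_inj_tail; apply app_inj_tail in H as [<- <-]; auto.
Qed.

Lemma snoc2_neq_singleton {A} (l : list A) x y s : (l ++ [x]) ++ [y] <> [s].
Proof. intros H%(f_equal (@length A)); rewrite !length_app in H; simpl in H; lia. Qed.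

Lemma not_Acc_chain {A} (C : A -> A -> Prop) x : ~ Acc C x ->
  exists sigma : nat -> A, sigma 0 = x /\ forall k, C (sigma (S k)) (sigma k).
Proof.
  intro Hx.
  assert (Hnext : forall p : {y | ~ Acc C y}, exists q : {y | ~ Acc C y},
             C (proj1_sig q) (proj1_sig p)).
  { intros [y Hy]; apply NNPP; intro Hno; apply Hy; constructor; intros z Hz.
    apply NNPP; intro Hz'; apply Hno; now exists (exist _ z Hz'). }
  pose (next p := proj1_sig (constructive_indefinite_description _ (Hnext p))).
  exists (fun k => proj1_sig (Nat.iter k next (exist _ x Hx))); split; [reflexivity |].
  intro k; exact (proj2_sig (constructive_indefinite_description _ (Hnext _))).
Qed.

Section RankTree.
Variables (St Lab : Type) (R : St -> St -> Prop) (L : St -> Lab) (B : St -> St -> Prop).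

Lemma tplus_snoc x y z : tplus R x y -> R y z -> tplus R x z.
Proof.
  induction 1 as [x y Hxy | x y y' Hxy _ IH]; intro Hz.
  - apply tplusS with y; [exact Hxy | now apply tplus1].
  - apply tplusS with y; [exact Hxy | exact (IH Hz)].
Qed.

Lemma fullpath_tplus d i j : fullpath R d -> i < j -> tplus R (d i) (d j).
Proof.
  intros Hd Hij; induction Hij as [| j _ IH].
  - apply tplus1, Hd.
  - exact (tplus_snoc IH (Hd j)).
Qed.

Lemma SKS_no_rank_path w sigma : SKS R L B -> B (sigma 0) w -> fullpath R sigma ->
  ~ (forall k, rank_cond R B w (sigma (S k))).
Proof.
  intros HB Hw Hsigma Hrank.
  destruct (proj2 (HB _ _ Hw) sigma Hsigma eq_refl)
    as (delta & Hdelta & Hd0 & pi & xi & [Hpi0 Hpi] & [Hxi0 Hxi] & Hmatch).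
  (* the second segment of sigma is matched to delta (xi 1), a strict successor of w *)
  assert (HB1 : B (sigma (pi 1)) (delta (xi 1))) by (apply Hmatch; split; [lia | apply Hpi]).
  assert (Hw1 : tplus R w (delta (xi 1))).
  { rewrite <- Hd0; apply fullpath_tplus; [exact Hdelta | specialize (Hxi 0); lia]. }
  specialize (Hpi 0); specialize (Hrank (pi 1 - 1)).
  replace (S (pi 1 - 1)) with (pi 1) in Hrank by lia.
  exact (proj2 Hrank _ Hw1 HB1).
Qed.

Variables s w : St.

Definition rank_step (y x : St) : Prop := B s w /\ R x y /\ rank_cond R B w y.

Lemma ranktCt_child_inv m x y :
  ranktCt R B s w ((m ++ [x]) ++ [y]) -> rank_step y x.
Proof.
  intros [Hsw (T & (Hct & _ & _ & Hcond) & HT)]; split; [exact Hsw | split].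
  - remember ((m ++ [x]) ++ [y]) as n eqn:En; destruct (Hct _ HT) as [| l x' y' _ HR].
    + now symmetry in En; apply snoc2_neq_singleton in En.
    + now apply snoc2_inj in En as (_ & <- & <-).
  - apply (Hcond (m ++ [x]) y HT); now destruct m.
Qed.

Lemma ranktCt_child_intro m x y :
  ranktCt R B s w (m ++ [x]) -> R x y -> rank_cond R B w y ->
  ranktCt R B s w ((m ++ [x]) ++ [y]).
Proof.
  intros [Hsw (T & (Hct & Hroot & Hpar & Hcond) & HT)] HR Hy; split; [exact Hsw |].
  exists (fun n => T n \/ n = (m ++ [x]) ++ [y]); split; [| now right].
  split; [| split; [| split]].
  - intros n [Hn | ->]; [now apply Hct |].
    rewrite <- app_assoc; apply ct_step; [now apply Hct | exact HR].
  - now left.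
  - intros l x' y' [Hn | Hn]; [left; eapply Hpar, Hn |].
    apply snoc2_inj in Hn as (-> & -> & _); now left.
  - intros l x' [Hn | Hn] Hl; [eapply Hcond; eassumption |].
    now apply app_inj_tail in Hn as [_ <-].
Qed.

Lemma ranktCt_children_by_last : children_by_last (ranktCt R B s w).
Proof.
  intros m m' x y Hm' Hchild; destruct (ranktCt_child_inv Hchild) as (_ & HR & Hy).
  exact (ranktCt_child_intro Hm' HR Hy).
Qed.

Lemma Acc_rank_step_root : SKS R L B -> Acc rank_step s.
Proof.
  intro HB; destruct (classic (B s w)) as [Hsw | Hsw].
  - apply NNPP; intros (sigma & Hs0 & Hsigma)%not_Acc_chain.
    rewrite <- Hs0 in Hsw; apply (SKS_no_rank_path HB Hsw); intro k; apply Hsigma.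
  - constructor; now intros y [].
Qed.

End RankTree.

Theorem lemma2 (S Lab K : Type) (R : S -> S -> Prop) (L : S -> Lab)
  (B : S -> S -> Prop)
  (HM : is_lts R) (HB : SKS R L B)
  (Homega : card_le nat K) (HS : card_le S K) :
  forall s w : S,
    (exists a, is_size (ranktCt R B s w) [s] a) /\
    (forall a, is_size (ranktCt R B s w) [s] a -> ocard_le a K).
Proof.
  intros s w; split.
  - apply (is_size_exists (step := rank_step R B s w)) with (m := []).
    + intros m x y; apply ranktCt_child_inv.
    + exact (Acc_rank_step_root s w HB).
  - intros a Ha.
    exact (is_size_ocard_le (@ranktCt_children_by_last S R B s w) (m := []) HS Ha).
Qed.
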